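(* There is an absolute constant $C$ such that the following holds. Let $\Sigma$ be a set with $|\Sigma|=r\ge 2$. If $n\ge 2+\log r$ and $\ell\ge 2^7r^3n$, then there exists a set $S\subseteq\Sigma^\ell$ of size $2^n$ such that for all $(v,a)\in S\times\Sigma$: (1) $|v[a]|\ge \frac{\ell}{2r}$; and (2) for every $I\subseteq v[a]$ of size $\ell/(8r)$, there are at most $Cr^2$ pairs $(w,b)\in S\times\Sigma$ for which $|I\cap w[b]|\ge \frac12|v[a]\cap w[b]|$.
   Context: For $v=(v_1,\dots,v_\ell)\in\Sigma^\ell$ and $a\in\Sigma$, $v[a]=\{i\in\{1,\dots,\ell\}: v_i=a\}$. Logarithms are base 2. *)

From Stdlib Require Import Reals.
From mathcomp Require Import all_boot.
Set Implicit Arguments. Unset Strict Implicit. Unset Printing Implicit Defensive.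

Definition log2 (x : R) : R := Rdiv (ln x) (ln (IZR 2)).

Definition n_ge_2_plus_log (n r : nat) : Prop :=
  Rle (Rplus (IZR 2) (log2 (INR r))) (INR n).

Definition pos (Sigma : finType) (l : nat) (v : l.-tuple Sigma) (a : Sigma)
  : {set 'I_l} := [set i : 'I_l | tnth v i == a].

From Stdlib Require Import Reals.
From mathcomp Require Import all_boot all_order all_algebra.
From mathcomp Require Import reals sequences exp.
From mathcomp Require Rstruct.
From mathcomp Require Import ring lra zify.
Set Implicit Arguments. Unset Strict Implicit. Unset Printing Implicit Defensive.
Import Order.TTheory GRing.Theory Num.Theory.

(* Probabilistic method, carried out by counting. Draw M = 2^n words of length l
   independently and uniformly; we show that with positive probability
   (a) no two words coincide,
   (b) every letter occurs at least l/(2r) times in every word, and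
   (c) there is no word v, letter a, set I ⊆ v[a] with |I| = l/(8r), and set of
       K = 199 r^2 pairs (w, b) with w another word such that I captures at
       least half of v[a] ∩ w[b].
   Each failure has expected count below a quarter of the total. For (b) and (c)
   this is an exponential-moment (Chernoff) bound: for (c), once the positions of
   v are fixed, the weight 2 on I and 1/2 on v[a] \ I is at least 1 on every word
   w capturing all letters of a set T, while its mean is at most
   exp(-|T||I|/(2r)) because |v[a] \ I| >= 3|I|; independence of the words
   multiplies these bounds over the K pairs, which beats the number of
   configurations. In (2), at most r of the pairs have w = v, so at most
   K - 1 + r <= 200 r^2 pairs are captured. *)

Section IndicatorSums.
Variable R : numDomainType.
Local Open Scope ring_scope.

Lemma exists_le_sum (T : finType) (P : pred T) :
  [exists x, P x]%:R <= \sum_x (P x)%:R :> R.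
Proof.
have sum_ge0 : 0 <= \sum_x (P x)%:R :> R by apply: sumr_ge0 => x _; rewrite ler0n.
case: existsP => [[x Px]|_] //; rewrite (bigD1 x) //= Px lerDl.
by apply: sumr_ge0 => y _; rewrite ler0n.
Qed.

Lemma sum_indicator_le (T : finType) (P : pred T) (F : T -> R) :
  (forall x, 0 <= F x) -> (forall x, P x -> 1 <= F x) ->
  \sum_x (P x)%:R <= \sum_x F x.
Proof. by move=> F0 F1; apply: ler_sum => x _; case: (boolP (P x)) => [/F1|]. Qed.

Lemma exists_predC_of_sum_lt (T : finType) (P : pred T) :
  \sum_x (P x)%:R < #|T|%:R :> R -> exists x, ~~ P x.
Proof.
move=> lt_card; case: (pickP (predC P)) => [x nPx|allP]; first by exists x.
move: lt_card; rewrite (eq_bigr (fun _ => 1)) => [|x _]; last first.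
  by have := allP x; rewrite /= => /negbFE ->.
by rewrite sumr_const ltxx.
Qed.

Lemma sum_indicator (T : finType) (A : {pred T}) :
  \sum_x (x \in A)%:R = #|A|%:R :> R.
Proof.
rewrite (eq_bigr (fun x => if x \in A then 1 else 0)) => [|x _]; last by case: (x \in A).
by rewrite -big_mkcond sumr_const.
Qed.

Lemma prod_cond_const (T : finType) (P : pred T) (c : R) :
  \prod_x (if P x then c else 1) = c ^+ #|[set x | P x]|.
Proof. by rewrite -big_mkcond prodr_const; congr (_ ^+ _); apply: eq_card => x; rewrite inE. Qed.

Lemma sum_tuple_const (Sigma : finType) l (c : R) :
  \sum_(w : l.-tuple Sigma) c = #|Sigma|%:R ^+ l * c.
Proof. by rewrite sumr_const card_tuple -natrX mulr_natl. Qed.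

Lemma sum_tuple_prod (Sigma : finType) l (g : 'I_l -> Sigma -> R) :
  \sum_(w : l.-tuple Sigma) \prod_(i < l) g i (tnth w i) = \prod_(i < l) \sum_c g i c.
Proof.
rewrite bigA_distr_bigA (reindex (fun f : {ffun 'I_l -> Sigma} => [tuple f i | i < l])) /=.
  by apply: eq_bigr => f _; apply: eq_bigr => i _; rewrite tnth_mktuple.
exists (fun w : l.-tuple Sigma => [ffun i => tnth w i]) => [f _|w _].
  by apply/ffunP => i; rewrite ffunE tnth_mktuple.
by apply: eq_from_tnth => i; rewrite tnth_mktuple ffunE.
Qed.

(* Conditioning on the value of coordinate i makes the other coordinates independent. *)
Lemma sum_ffun_pinned (T : finType) M (i : 'I_M) (g : T -> R) (h : 'I_M -> T -> T -> R) :
  \sum_(f : {ffun 'I_M -> T}) g (f i) * \prod_(k | k != i) h k (f i) (f k) =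
  \sum_v g v * \prod_(k | k != i) \sum_w h k v w.
Proof.
pose F v k w := if k == i then (w == v)%:R * g v else h k v w.
have pin (f : {ffun 'I_M -> T}) :
    g (f i) * \prod_(k | k != i) h k (f i) (f k) = \sum_v \prod_k F v k (f k).
  rewrite (bigD1 (f i)) //= [X in _ + X]big1 => [|v fiv]; last first.
    by rewrite (bigD1 i) //= /F eqxx eq_sym (negPf fiv) !mul0r.
  rewrite addr0 [RHS](bigD1 i) //= {1}/F !eqxx mul1r; congr (_ * _).
  by apply: eq_bigr => k /negPf ki; rewrite /F ki.
rewrite (eq_bigr _ (fun f _ => pin f)) exchange_big /=; apply: eq_bigr => v _.
rewrite -bigA_distr_bigA /= (bigD1 i) //= {1}/F eqxx (bigD1 v) //= eqxx mul1r.
rewrite big1 ?addr0 => [|w /negPf ->]; last by rewrite mul0r.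
by congr (_ * _); apply: eq_bigr => k /negPf ki; apply: eq_bigr => w _; rewrite /F ki.
Qed.

End IndicatorSums.

Section ExponentialMoments.
Variable R : realType.
Local Open Scope ring_scope.

Lemma sum_tuple_weight_le (Sigma : finType) l (T : {set Sigma}) (b : 'I_l -> R) :
  (0 < #|Sigma|)%N -> (forall i, 0 <= b i) ->
  \sum_(w : l.-tuple Sigma) \prod_i (if tnth w i \in T then b i else 1)
    <= #|Sigma|%:R ^+ l * expR (#|T|%:R / #|Sigma|%:R * \sum_i (b i - 1)).
Proof.
move=> Sigma_gt0 b0; rewrite (sum_tuple_prod (fun i c => if c \in T then b i else 1)).
set r : R := #|Sigma|%:R; set t : R := #|T|%:R.
have r0 : 0 < r by rewrite ltr0n.
have t0 : 0 <= t by rewrite ler0n.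
have tr : t <= r by rewrite ler_nat max_card.
have sum_weight i : \sum_c (if c \in T then b i else 1) = r + t * (b i - 1).
  rewrite (eq_bigr (fun c => 1 + (if c \in T then b i - 1 else 0))) => [|c _]; last first.
    by case: (c \in T); rewrite ?addr0 // addrC subrK.
  by rewrite big_split /= -big_mkcond /= !sumr_const mulr_natl.
under eq_bigr do rewrite sum_weight.
apply: (@le_trans _ _ (\prod_(i < l) (r * expR (t / r * (b i - 1))))).
  apply: ler_prod => i _; apply/andP; split; first by have := b0 i; nra.
  apply: le_trans (ler_wpM2l (ltW r0) (expR_ge1Dx _)).
  have -> : r * (1 + t / r * (b i - 1)) = r + t * (b i - 1) by field; rewrite lt0r_neq0.
  exact: lexx.
by rewrite big_split prodr_const card_ord mulr_sumr expR_sum.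
Qed.

Lemma expR1_ge : 9 / 4 <= expR 1 :> R.
Proof.
have half_ge : 3 / 2 <= expR (2^-1) :> R by apply: le_trans (expR_ge1Dx _); lra.
have -> : expR 1 = expR (2^-1) * expR (2^-1) :> R by rewrite -expRD; congr expR; field.
by apply: le_trans (ler_pM _ _ half_ge half_ge); lra.
Qed.

Lemma exp2_le_expR k : 2 ^+ k <= expR k%:R :> R.
Proof.
rewrite -[k%:R]mulr1 expRM_natl; apply: lerXn2r; rewrite ?nnegrE ?expR_ge0 //.
by apply: le_trans (expR_ge1Dx _); lra.
Qed.

Lemma exp2_expR_le1 k (x : R) : k%:R <= x -> 2 ^+ k * expR (- x) <= 1.
Proof.
move=> kx; apply: le_trans (ler_wpM2r (expR_ge0 _) (exp2_le_expR k)) _.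
by rewrite -expRD -[X in _ <= X]expR0 ler_expR subr_le0.
Qed.

(* Chernoff: the weight exp(l/(2r) - |w[a]|) is at least 1 on rare words, and
   exp(-1) <= 4/9 bounds its mean. *)
Lemma sum_rare_letter_le (Sigma : finType) l (a : Sigma) : (0 < #|Sigma|)%N ->
  \sum_(w : l.-tuple Sigma) ((2 * #|Sigma| * #|pos w a| < l)%N)%:R
    <= #|Sigma|%:R ^+ l * expR (- (l%:R / (18 * #|Sigma|%:R))) :> R.
Proof.
move=> Sigma_gt0; set r : R := #|Sigma|%:R; set L : R := l%:R.
have r0 : 0 < r by rewrite ltr0n.
have L0 : 0 <= L by rewrite ler0n.
pose F (w : l.-tuple Sigma) := expR (L / (2 * r)) *
  \prod_(i < l) (if tnth w i \in [set a] then expR (-1) else 1).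
apply: (@le_trans _ _ (\sum_w F w)).
  apply: sum_indicator_le => [w|w rare].
    by rewrite mulr_ge0 ?expR_ge0 // prodr_ge0 // => i _; case: ifP; rewrite ?expR_ge0.
  rewrite /F prod_cond_const -expRM_natl -expRD; apply: le_trans (expR_ge1Dx _).
  have -> : #|[set i | tnth w i \in [set a]]| = #|pos w a|.
    by apply: eq_card => i; rewrite !inE.
  rewrite lerDl.
  move: rare; rewrite -(ltr_nat R) !natrM -/r -/L; set z : R := #|pos w a|%:R => rare.
  have -> : L / (2 * r) + z * -1 = (L - 2 * r * z) / (2 * r) by field; rewrite lt0r_neq0.
  by rewrite divr_ge0 ?subr_ge0 ?(ltW rare) ?mulr_ge0 ?(ltW r0).
rewrite /F -mulr_sumr.
apply: le_trans (ler_wpM2l (expR_ge0 _) (sum_tuple_weight_le _ Sigma_gt0 (fun=> expR_ge0 (-1)))) _.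
rewrite mulrCA ler_pM2l ?exprn_gt0 // -expRD ler_expR cards1 sumrB !sumr_const card_ord.
rewrite -[expR (-1) *+ l]mulr_natr -/r -/L.
have inv_e_le : expR (-1) <= 4 / 9 :> R.
  rewrite expRN -[4 / 9 : R]invf_div lef_pV2 ?posrE ?expR_gt0 ?divr_gt0 //.
  exact: expR1_ge.
have -> : L / (2 * r) + 1 / r * (expR (-1) * L - L) =
          L / r * (expR (-1) - 4 / 9) - L / (18 * r) by field; rewrite lt0r_neq0.
rewrite lerBlDr addNr mulr_ge0_le0 ?divr_ge0 ?(ltW r0) //.
by rewrite subr_le0.
Qed.
End ExponentialMoments.

Definition captures (Sigma : finType) l (v : l.-tuple Sigma) a (I : {set 'I_l}) (w : l.-tuple Sigma) b :=
  #|pos v a :&: pos w b| <= 2 * #|I :&: pos w b|.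

Section Captures.
Variables (Sigma : finType) (l : nat).
Implicit Types (v w : l.-tuple Sigma) (a : Sigma) (I J : {set 'I_l}) (T : {set Sigma}).

Lemma sum_card_setI_pos w T J :
  \sum_(b in T) #|J :&: pos w b| = #|[set i in J | tnth w i \in T]|.
Proof.
rewrite -sum1dep_card (partition_big (fun i => tnth w i) (mem T)) => [|i /andP[]//].
apply: eq_bigr => b bT; rewrite sum1dep_card; apply: eq_card => i; rewrite !inE.
by case: eqP => [->|]; rewrite ?bT ?andbT ?andbF.
Qed.

Lemma captures_all_card_le v w a I T :
  I \subset pos v a -> [forall b in T, captures v a I w b] ->
  #|[set i in pos v a :\: I | tnth w i \in T]| <= #|[set i in I | tnth w i \in T]|.
Proof.
move=> sIA /forall_inP capT; rewrite -!sum_card_setI_pos; apply: leq_sum => b /capT.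
rewrite /captures -(cardsID I (pos v a :&: pos w b)).
have -> : pos v a :&: pos w b :&: I = I :&: pos w b.
  by rewrite setIC setIA (setIidPl sIA).
have -> : pos v a :&: pos w b :\: I = (pos v a :\: I) :&: pos w b.
  by apply/setP => i; rewrite !inE andbA.
lia.
Qed.

Local Open Scope ring_scope.

Lemma sum_captures_all_le (R : realType) v a I T :
  (0 < #|Sigma|)%N -> I \subset pos v a -> (4 * #|I| <= #|pos v a|)%N ->
  \sum_(w : l.-tuple Sigma) [forall b in T, captures v a I w b]%:R
    <= #|Sigma|%:R ^+ l * expR (- (#|T|%:R * #|I|%:R / (2 * #|Sigma|%:R))) :> R.
Proof.
move=> Sigma_gt0 sIA big_A; set A' := pos v a :\: I.
pose be i : R := if i \in I then 2 else if i \in A' then 2^-1 else 1.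
have be0 i : 0 <= be i by rewrite /be; case: ifP => _; [|case: ifP => _]; lra.
apply: le_trans (sum_indicator_le (F := fun w => \prod_i (if tnth w i \in T then be i else 1)) _ _) _.
- by move=> w; apply: prodr_ge0 => i _; case: ifP.
- move=> w /(captures_all_card_le sIA); rewrite -/A' => outside_le.
  have split_be i : (if tnth w i \in T then be i else 1) =
      (if (i \in I) && (tnth w i \in T) then 2 else 1) *
      (if (i \in A') && (tnth w i \in T) then 2^-1 else 1).
    rewrite /be /A' inE; case: (tnth w i \in T); rewrite ?andbF ?andbT ?mulr1 //.
    by case: (i \in I); rewrite ?mulr1 ?mul1r.
  rewrite (eq_bigr _ (fun i _ => split_be i)) big_split /= !prod_cond_const.
  set Y := #|[set x in A' | _]| in outside_le *.
  apply: (@le_trans _ _ (2 ^+ Y * 2^-1 ^+ Y)); first by rewrite -exprMn mulfV ?expr1n ?pnatr_eq0.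
  by rewrite ler_wpM2r ?exprn_ge0 ?invr_ge0 // ler_eXn2l // ltr1n.
apply: le_trans (sum_tuple_weight_le _ Sigma_gt0 be0) _.
rewrite ler_pM2l ?exprn_gt0 ?ltr0n // ler_expR.
set r : R := #|Sigma|%:R; set t : R := #|T|%:R; set s : R := #|I|%:R.
have r0 : 0 < r by rewrite ltr0n.
have sum_be : \sum_i (be i - 1) = s - #|A'|%:R / 2.
  rewrite (eq_bigr (fun i => (i \in I)%:R - (i \in A')%:R / 2)) => [|i _].
    by rewrite sumrB -mulr_suml !sum_indicator.
  rewrite /be /A' inE; case: (i \in I) => /=; first lra.
  by case: (i \in pos v a) => /=; lra.
have A'_ge : 3 * s <= #|A'|%:R.
  rewrite /s -natrM ler_nat; move: big_A; rewrite -(cardsID I (pos v a)) (setIidPr sIA).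
  by rewrite -/A'; lia.
have -> : - (t * s / (2 * r)) = t / r * (- s / 2) by field; rewrite lt0r_neq0.
rewrite sum_be ler_wpM2l ?divr_ge0 ?ler0n ?(ltW r0) //; lra.
Qed.

End Captures.

Section UniformFunctions.
Variables (R : numDomainType) (T : finType) (M : nat).
Local Open Scope ring_scope.
Local Notation N := (#|T|%:R : R).

Lemma sum_ffun_at (i : 'I_M) (g : T -> R) :
  \sum_(f : {ffun 'I_M -> T}) g (f i) = N ^+ (M - 1) * \sum_v g v.
Proof.
transitivity (\sum_(f : {ffun 'I_M -> T}) g (f i) * \prod_(k | k != i) (1 : R)).
  by apply: eq_bigr => f _; rewrite big1 ?mulr1.
rewrite (sum_ffun_pinned i g (fun _ _ _ => 1)) mulr_sumr; apply: eq_bigr => v _.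
by rewrite mulrC sumr_const -mulr_natl mulr1 prodr_const cardC1 card_ord subn1.
Qed.

Lemma sum_ffun_eq (i j : 'I_M) : i != j ->
  \sum_(f : {ffun 'I_M -> T}) (f i == f j)%:R = N ^+ (M - 1).
Proof.
move=> ij; pose h k (v w : T) : R := if k == j then (w == v)%:R else 1.
have pinned (f : {ffun 'I_M -> T}) : (f i == f j)%:R = 1 * \prod_(k | k != i) h k (f i) (f k).
  rewrite mul1r (bigD1 j) 1?eq_sym //= /h eqxx eq_sym big1 ?mulr1 // => k /andP[_].
  by move=> /negPf ->.
rewrite (eq_bigr _ (fun f _ => pinned f)) (sum_ffun_pinned i (fun _ => 1) h).
have inner v k : k != i -> \sum_w h k v w = if k == j then 1 else N.
  move=> _; rewrite /h; case: eqP => _; last by rewrite sumr_const.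
  by rewrite (bigD1 v) //= eqxx big1 ?addr0 // => w /negPf ->.
under eq_bigr do rewrite mul1r (eq_bigr _ (inner _)) (bigD1 j) 1?eq_sym //= eqxx mul1r.
have card_rest : #|[pred k : 'I_M | (k != i) && (k != j)]| = (M - 2)%N.
  rewrite -[in RHS](card_ord M) -(cardC (pred2 i j)) card2 ij addKn.
  by apply: eq_card => k; rewrite !inE negb_or.
have M_gt1 : (1 < M)%N by move: (ltn_ord i) (ltn_ord j) ij; rewrite -val_eqE /=; lia.
rewrite (eq_bigr (fun _ => N ^+ (M - 2))) => [|v _]; last first.
  rewrite (eq_bigr (fun _ => N)) => [|k /andP[_ /negPf ->] //].
  by rewrite prodr_const card_rest.
by rewrite sumr_const -[N ^+ _ *+ _]mulr_natl -exprS; congr (_ ^+ _); lia.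
Qed.

End UniformFunctions.

Lemma sum_card_fiber (I J : finType) (P : {set I * J}) :
  \sum_i #|[set j | (i, j) \in P]| = #|P|.
Proof.
rewrite -sum1_card [RHS]big_mkcond /= (eq_bigr (fun p => if (p.1, p.2) \in P then 1 else 0)) => [|[]//].
rewrite -(pair_bigA _ (fun i j => if (i, j) \in P then 1 else 0)); apply: eq_bigr => i _.
by rewrite -sum1_card big_mkcond; apply: eq_bigr => j _; rewrite inE.
Qed.

Section RandomFamilies.
Variables (Sigma : finType) (l M : nat).
Local Notation family := {ffun 'I_M -> l.-tuple Sigma}.

Definition has_repeat (f : family) := [exists i, exists j, (i != j) && (f i == f j)].

Definition has_rare_letter (f : family) :=
  [exists i, exists a, 2 * #|Sigma| * #|pos (f i) a| < l].

Definition capture_config (f : family) i a (I : {set 'I_l}) (P : {set 'I_M * Sigma}) :=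
  [&& I \subset pos (f i) a, 4 * #|I| <= #|pos (f i) a| &
      [forall p in P, captures (f i) a I (f p.1) p.2]].

Definition has_capture_config K (f : family) :=
  [exists i, exists a, exists I : {set 'I_l}, exists P : {set 'I_M * Sigma},
     [&& #|I| * (8 * #|Sigma|) == l, #|P| == K, [forall p in P, p.1 != i] &
         capture_config f i a I P]].

Variable R : realType.
Hypothesis Sigma_gt0 : 0 < #|Sigma|.
Local Open Scope ring_scope.
Local Notation Nw := (#|Sigma|%:R ^+ l : R).

Lemma card_tuple_Nw : #|{: l.-tuple Sigma}|%:R = Nw.
Proof. by rewrite card_tuple natrX. Qed.

Lemma Nw_ge0 : 0 <= Nw.
Proof. by rewrite exprn_ge0 ?ler0n. Qed.

Lemma sum_has_repeat_le : \sum_(f : family) (has_repeat f)%:R <= M%:R ^+ 2 * Nw ^+ (M - 1).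
Proof.
apply: (@le_trans _ _ (\sum_(f : family) \sum_i \sum_j ((i != j) && (f i == f j))%:R)).
  apply: ler_sum => f _; apply: le_trans (exists_le_sum _ _) _.
  by apply: ler_sum => i _; apply: exists_le_sum.
rewrite exchange_big /=.
apply: (@le_trans _ _ (\sum_(i < M) \sum_(j < M) Nw ^+ (M - 1))); last first.
  by rewrite !sumr_const card_ord expr2 -natrM mulr_natl mulrnA.
apply: ler_sum => i _; rewrite exchange_big; apply: ler_sum => j _ /=.
have [<-|ij] := eqVneq i j.
  by rewrite big1 ?exprn_ge0 ?Nw_ge0 // => f _; rewrite eqxx.
by rewrite (eq_bigr (fun f : family => (f i == f j)%:R)) ?sum_ffun_eq ?card_tuple_Nw // => f _; rewrite ij.
Qed.

Lemma sum_has_rare_letter_le :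
  \sum_(f : family) (has_rare_letter f)%:R
    <= (M * #|Sigma|)%:R * (Nw ^+ M * expR (- (l%:R / (18 * #|Sigma|%:R)))).
Proof.
apply: (@le_trans _ _ (\sum_(f : family) \sum_i \sum_a
                          ((2 * #|Sigma| * #|pos (f i) a| < l)%N)%:R)).
  apply: ler_sum => f _; apply: le_trans (exists_le_sum _ _) _.
  by apply: ler_sum => i _; apply: exists_le_sum.
rewrite exchange_big /=.
apply: (@le_trans _ _ (\sum_(i < M) \sum_(a : Sigma)
                          Nw ^+ M * expR (- (l%:R / (18 * #|Sigma|%:R))))); last first.
  by rewrite !sumr_const card_ord [(M * _)%:R * _]mulr_natl mulnC mulrnA.
apply: ler_sum => i _; rewrite exchange_big; apply: ler_sum => a _ /=.
rewrite (sum_ffun_at i (fun v => ((2 * #|Sigma| * #|pos v a| < l)%N)%:R)) card_tuple_Nw.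
have M_gt0 : (0 < M)%N := leq_ltn_trans (leq0n i) (ltn_ord i).
rewrite -[in X in _ <= X](subnK M_gt0) exprD expr1 -mulrA ler_wpM2l ?exprn_ge0 ?Nw_ge0 //.
exact: sum_rare_letter_le.
Qed.

Lemma capture_config_le_pinned (f : family) i a I P :
  (capture_config f i a I P)%:R <=
  ((I \subset pos (f i) a) && (4 * #|I| <= #|pos (f i) a|)%N)%:R *
  \prod_(k | k != i) [forall b in [set b | (k, b) \in P], captures (f i) a I (f k) b]%:R :> R.
Proof.
rewrite /capture_config; case: (boolP [&& _, _ & _]) => [/and3P [-> -> capP]|_]; last first.
  by rewrite mulr_ge0 ?prodr_ge0 // => k _; rewrite ler0n.
rewrite mul1r big1 // => k _; suff -> : [forall b in [set b | (k, b) \in P],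
  captures (f i) a I (f k) b] by [].
by apply/forall_inP => b; rewrite inE => /(forall_inP capP).
Qed.

Lemma sum_capture_config_le i a (I : {set 'I_l}) (P : {set 'I_M * Sigma}) :
  [forall p in P, p.1 != i] ->
  \sum_(f : family) (capture_config f i a I P)%:R
    <= Nw ^+ M * expR (- (#|P|%:R * #|I|%:R / (2 * #|Sigma|%:R))).
Proof.
move=> avoid; set s : R := #|I|%:R; set r : R := #|Sigma|%:R.
pose T k := [set b | (k, b) \in P].
pose c k := Nw * expR (- (#|T k|%:R * s / (2 * r))).
apply: le_trans (ler_sum _ (fun f _ => capture_config_le_pinned f i a I P)) _.
rewrite (sum_ffun_pinned i (fun v => ((I \subset pos v a) && (4 * #|I| <= #|pos v a|)%N)%:R)
  (fun k v w => [forall b in T k, captures v a I w b]%:R)).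
apply: (@le_trans _ _ (\sum_(v : l.-tuple Sigma) \prod_(k | k != i) c k)).
  apply: ler_sum => v _; case: (boolP (_ && _)) => [/andP [sub big]|_]; last first.
    by rewrite mul0r prodr_ge0 // => k _; rewrite mulr_ge0 ?Nw_ge0 ?expR_ge0.
  rewrite mul1r; apply: ler_prod => k _; rewrite sumr_ge0 => [|w _]; last by rewrite ler0n.
  exact: sum_captures_all_le.
have T_i : #|T i| = 0%N.
  apply: eq_card0 => b; rewrite inE; apply/negP => /(forall_inP avoid) /=.
  by rewrite eqxx.
rewrite sum_tuple_const big_split /= prodr_const cardC1 card_ord -expR_sum.
have sum_T : \sum_(k | k != i) - (#|T k|%:R * s / (2 * r)) = - (#|P|%:R * s / (2 * r)).
  rewrite sumrN -!mulr_suml -natr_sum -(sum_card_fiber P) [in RHS](bigD1 i) //=.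
  by rewrite T_i.
have M_gt0 : (0 < M)%N := leq_ltn_trans (leq0n i) (ltn_ord i).
by rewrite sum_T mulrA -exprS prednK.
Qed.

Lemma sum_capture_event_le K i a (I : {set 'I_l}) (P : {set 'I_M * Sigma}) :
  \sum_(f : family) [&& #|I| * (8 * #|Sigma|) == l, #|P| == K,
                        [forall p in P, p.1 != i] & capture_config f i a I P]%:R
    <= (#|P| == K)%:R * (Nw ^+ M * expR (- (K%:R * l%:R / (16 * #|Sigma|%:R ^+ 2)))).
Proof.
have [/and3P [/eqP size_I /eqP size_P avoid]|not_config] :=
  boolP [&& #|I| * (8 * #|Sigma|) == l, #|P| == K & [forall p in P, p.1 != i]]; last first.
  rewrite big1 => [|f _].
    exact: mulr_ge0 (ler0n _ _) (mulr_ge0 (exprn_ge0 _ Nw_ge0) (expR_ge0 _)).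
  by case: and4P => // -[? ? ? _]; case/and3P: not_config.
rewrite size_I size_P avoid !eqxx mul1r /=.
apply: le_trans (sum_capture_config_le a I avoid) _.
rewrite size_P ler_wpM2l ?exprn_ge0 ?Nw_ge0 // ler_expR lerN2.
have l_eq : l%:R = #|I|%:R * (8 * #|Sigma|%:R) :> R.
  by rewrite -!natrM; apply: congr1; exact: esym size_I.
have r_gt0 : 0 < #|Sigma|%:R :> R by rewrite ltr0n.
by rewrite l_eq le_eqVlt; apply/orP; left; apply/eqP; field; rewrite lt0r_neq0.
Qed.

Lemma sum_has_capture_config_le K :
  \sum_(f : family) (has_capture_config K f)%:R
    <= (M * #|Sigma| * 2 ^ l * 'C(M * #|Sigma|, K))%:R *
       (Nw ^+ M * expR (- (K%:R * l%:R / (16 * #|Sigma|%:R ^+ 2)))).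
Proof.
set B := _ * expR _.
apply: (@le_trans _ _ (\sum_(f : family) \sum_i \sum_a \sum_(I : {set 'I_l})
    \sum_(P : {set 'I_M * Sigma}) [&& #|I| * (8 * #|Sigma|) == l, #|P| == K,
       [forall p in P, p.1 != i] & capture_config f i a I P]%:R)).
  apply: ler_sum => f _; apply: le_trans (exists_le_sum _ _) _.
  apply: ler_sum => i _; apply: le_trans (exists_le_sum _ _) _.
  apply: ler_sum => a _; apply: le_trans (exists_le_sum _ _) _.
  by apply: ler_sum => I _; apply: exists_le_sum.
apply: (@le_trans _ _ (\sum_(i < M) \sum_(a : Sigma) \sum_(I : {set 'I_l})
                         \sum_(P : {set 'I_M * Sigma}) (#|P| == K)%:R * B)).
  rewrite exchange_big; apply: ler_sum => i _; rewrite exchange_big; apply: ler_sum => a _.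
  rewrite exchange_big; apply: ler_sum => I _; rewrite exchange_big; apply: ler_sum => P _.
  exact: sum_capture_event_le.
have draws : \sum_(P : {set 'I_M * Sigma}) (#|P| == K)%:R * B = 'C(M * #|Sigma|, K)%:R * B.
  rewrite -mulr_suml (eq_bigr (fun P => (P \in [set P : {set 'I_M * Sigma} | #|P| == K])%:R)).
    by rewrite sum_indicator card_draws card_prod card_ord.
  by move=> P _; rewrite inE.
under eq_bigr do under eq_bigr do under eq_bigr do rewrite draws.
rewrite !sumr_const card_ord -(@cardsT {set 'I_l}) -powersetT card_powerset cardsT card_ord.
by rewrite le_eqVlt; apply/orP; left; apply/eqP; ring.
Qed.

End RandomFamilies.

Lemma bin_le_expn m k : 'C(m, k) <= m ^ k.
Proof.
apply: (@leq_trans (m ^_ k)); first by rewrite -bin_ffact leq_pmulr ?fact_gt0.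
rewrite ffact_prod -[in m ^ k](card_ord k) -prod_nat_const.
by apply: leq_prod => i _; exact: leq_subr.
Qed.

Lemma expn3_mulE m : m ^ 3 = m * m * m.
Proof. by rewrite !expnS expn0 muln1 mulnA. Qed.

Section Arithmetic.
Variables (r n l : nat).
Hypotheses (r_ge2 : 2 <= r) (n_ge1 : 1 <= n) (l_ge : 2 ^ 7 * (r * r * r) * n <= l).

Lemma four_exp2_sq_le : 4 * (2 ^ n) ^ 2 <= r ^ l.
Proof.
rewrite -expnM -(expnD 2 2); apply: (@leq_trans (2 ^ l)); last by rewrite leq_exp2r; lia.
rewrite leq_exp2l //; apply: leq_trans l_ge.
have r_cube_ge1 : 1 <= r * r * r by nia.
nia.
Qed.

Lemma rare_letter_exponent_le : (2 + (n + r)) * (18 * r) <= l.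
Proof.
have small : 2 + (n + r) <= 3 * (r * n) by nia.
apply: leq_trans l_ge; apply: (@leq_trans (3 * (r * n) * (18 * r))).
  by rewrite leq_mul2r small orbT.
nia.
Qed.

Lemma capture_exponent_le :
  (2 + (n + r) + l + (n + r) * (199 * (r * r))) * (16 * (r * r)) <= 199 * (r * r) * l.
Proof.
suff h : 16 * (2 + (n + r) + l + (n + r) * (199 * (r * r))) <= 199 * l.
  by move: (leq_mul (leqnn (r * r)) h); lia.
have small : n + r <= 2 * (r * n) by nia.
have rn_le : r * n <= r * r * r * n by nia.
have big : (n + r) * (199 * (r * r)) <= 398 * (r * r * r * n).
  apply: (@leq_trans (2 * (r * n) * (199 * (r * r)))); first by rewrite leq_mul2r small orbT.
  nia.
lia.
Qed.

Let exp2_mul_le : 2 ^ n * r <= 2 ^ (n + r).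
Proof. by rewrite expnD leq_pmul2l ?expn_gt0 // ltnW // ltn_expl. Qed.

Local Open Scope ring_scope.
Variable R : realType.

Lemma rare_letter_ratio_le : 4 * (2 ^ n * r)%:R * expR (- (l%:R / (18 * r%:R))) <= 1 :> R.
Proof.
have r_gt0 : 0 < r%:R :> R by rewrite ltr0n; lia.
apply: le_trans (exp2_expR_le1 (k := 2 + (n + r)) (x := l%:R / (18 * r%:R)) _); last first.
  by rewrite ler_pdivlMr ?mulr_gt0 // -!natrM ler_nat rare_letter_exponent_le.
rewrite ler_wpM2r ?expR_ge0 // -natrX -(natrM R 4) ler_nat expnD leq_mul2l exp2_mul_le.
by rewrite orbT.
Qed.

Lemma capture_ratio_le :
  4 * (2 ^ n * r * 2 ^ l * 'C(2 ^ n * r, 199 * r ^ 2))%:R *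
    expR (- ((199 * r ^ 2)%:R * l%:R / (16 * r%:R ^+ 2))) <= 1 :> R.
Proof.
have r_gt0 : 0 < r%:R :> R by rewrite ltr0n; lia.
rewrite -mulnn; set K := (199 * (r * r))%N.
apply: le_trans (exp2_expR_le1 (k := 2 + (n + r) + l + (n + r) * K)
  (x := K%:R * l%:R / (16 * r%:R ^+ 2)) _); last first.
  by rewrite ler_pdivlMr ?mulr_gt0 ?exprn_gt0 // -natrX -!natrM ler_nat capture_exponent_le.
rewrite ler_wpM2r ?expR_ge0 // -natrX -(natrM R 4) ler_nat.
apply: (@leq_trans (2 ^ 2 * (2 ^ (n + r) * 2 ^ l * (2 ^ (n + r)) ^ K))).
  rewrite leq_mul2l /= leq_mul // ?leq_mul //; apply: leq_trans (bin_le_expn _ _) _.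
  by rewrite leq_exp2r ?exp2_mul_le // /K; nia.
by rewrite -expnM -!expnD.
Qed.

End Arithmetic.

Section GoodFamily.
Variables (Sigma : finType) (n l : nat) (R : realType).
Hypotheses (r_ge2 : (2 <= #|Sigma|)%N) (n_ge1 : (1 <= n)%N)
  (l_ge : (2 ^ 7 * (#|Sigma| * #|Sigma| * #|Sigma|) * n <= l)%N).
Local Open Scope ring_scope.
Local Notation Nw := (#|Sigma|%:R ^+ l : R).
Local Notation family := {ffun 'I_(2 ^ n) -> l.-tuple Sigma}.

Let Sigma_gt0 : (0 < #|Sigma|)%N. Proof. exact: ltnW r_ge2. Qed.

Lemma four_sum_has_repeat_le : 4 * \sum_(f : family) (has_repeat f)%:R <= Nw ^+ (2 ^ n).
Proof.
apply: le_trans (ler_wpM2l _ (sum_has_repeat_le Sigma l (2 ^ n) R)) _ => //.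
have M_gt0 : (0 < 2 ^ n)%N by rewrite expn_gt0.
rewrite mulrA -[in X in _ <= X](subnK M_gt0) exprD expr1 mulrC.
rewrite ler_wpM2l ?exprn_ge0 ?Nw_ge0 // -natrX -natrM -natrX ler_nat.
exact: four_exp2_sq_le.
Qed.

Lemma four_sum_has_rare_letter_le :
  4 * \sum_(f : family) (has_rare_letter f)%:R <= Nw ^+ (2 ^ n).
Proof.
apply: le_trans (ler_wpM2l _ (sum_has_rare_letter_le l (2 ^ n) R Sigma_gt0)) _ => //.
set X := (_ * _)%:R; set e := expR _.
have -> : 4 * (X * (Nw ^+ (2 ^ n) * e)) = Nw ^+ (2 ^ n) * (4 * X * e) by ring.
rewrite -[X in _ <= X]mulr1 ler_pM2l ?exprn_gt0 ?ltr0n //.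
exact: rare_letter_ratio_le.
Qed.

Lemma four_sum_has_capture_config_le :
  4 * \sum_(f : family) (has_capture_config (199 * #|Sigma| ^ 2)%N f)%:R <= Nw ^+ (2 ^ n).
Proof.
apply: le_trans (ler_wpM2l _ (sum_has_capture_config_le l (2 ^ n) R Sigma_gt0 _)) _ => //.
set X := (_ * _)%:R; set e := expR _.
have -> : 4 * (X * (Nw ^+ (2 ^ n) * e)) = Nw ^+ (2 ^ n) * (4 * X * e) by ring.
rewrite -[X in _ <= X]mulr1 ler_pM2l ?exprn_gt0 ?ltr0n //.
exact: capture_ratio_le.
Qed.

End GoodFamily.

Section ConcreteReals.
Import Rstruct.
Local Open Scope ring_scope.

Lemma exists_good_family (Sigma : finType) n l :
  (2 <= #|Sigma|)%N -> (1 <= n)%N -> (2 ^ 7 * #|Sigma| ^ 3 * n <= l)%N ->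
  exists f : {ffun 'I_(2 ^ n) -> l.-tuple Sigma},
    [&& ~~ has_repeat f, ~~ has_rare_letter f & ~~ has_capture_config (199 * #|Sigma| ^ 2)%N f].
Proof.
rewrite expn3_mulE => r_ge2 n_ge1 l_ge; set K := (199 * #|Sigma| ^ 2)%N.
pose bad (f : {ffun 'I_(2 ^ n) -> l.-tuple Sigma}) :=
  [|| has_repeat f, has_rare_letter f | has_capture_config K f].
have [f] : exists f, ~~ bad f; last by rewrite /bad !negb_or => ?; exists f.
apply: (exists_predC_of_sum_lt (R := Rdefinitions.R)).
rewrite card_ffun card_tuple card_ord !natrX.
apply: (@le_lt_trans _ _ (\sum_f ((has_repeat f)%:R + (has_rare_letter f)%:R +
                                  (has_capture_config K f)%:R))).
  apply: ler_sum => f _; rewrite /bad.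
  by case: (has_repeat f) (has_rare_letter f) (has_capture_config K f) => [] [] [] /=; lra.
have total_gt0 : 0 < (#|Sigma|%:R ^+ l) ^+ (2 ^ n) :> Rdefinitions.R.
  by rewrite !exprn_gt0 ?ltr0n //; lia.
rewrite !big_split /=.
have := four_sum_has_repeat_le Rdefinitions.R r_ge2 n_ge1 l_ge.
have := four_sum_has_rare_letter_le Rdefinitions.R r_ge2 n_ge1 l_ge.
have := four_sum_has_capture_config_le Rdefinitions.R r_ge2 n_ge1 l_ge.
rewrite -/K; lra.
Qed.

End ConcreteReals.

Lemma n_ge_2_plus_log_ge2 n r : 2 <= r -> n_ge_2_plus_log n r -> 2 <= n.
Proof.
rewrite /n_ge_2_plus_log /log2 => r_ge2 le_n.
have r_gt1 : Rlt 1 (INR r) by apply: lt_1_INR; lia.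
have ln2_gt0 : Rlt 0 (Rpower.ln (IZR 2)).
  by rewrite -ln_1; apply: ln_increasing; [exact: Rlt_0_1 | exact: (IZR_lt 1 2)].
have lnr_gt0 : Rlt 0 (Rpower.ln (INR r)) by rewrite -ln_1; apply: ln_increasing => //; exact: Rlt_0_1.
have two_le_n : Rle (INR 2) (INR n).
  rewrite INR_IZR_INZ; apply: Rle_trans le_n; rewrite -{1}(Rplus_0_r (IZR 2)).
  by apply/Rplus_le_compat_l/Rlt_le/Rdiv_lt_0_compat.
by apply/ssrnat.leP/INR_le.
Qed.

Lemma card_capture_pairs_lt (Sigma : finType) l M (f : {ffun 'I_M -> l.-tuple Sigma}) K i a
    (I : {set 'I_l}) :
  ~~ has_capture_config K f -> #|I| * (8 * #|Sigma|) = l ->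
  I \subset pos (f i) a -> 4 * #|I| <= #|pos (f i) a| ->
  #|[set p : 'I_M * Sigma | (p.1 != i) && captures (f i) a I (f p.1) p.2]| < K.
Proof.
move=> no_config size_I sIA big_A; rewrite ltnNge; apply: contra no_config => K_le.
set P0 := [set p | _] in K_le.
have : 0 < #|[set P : {set 'I_M * Sigma} | P \subset P0 & #|P| == K]|.
  by rewrite cards_draws bin_gt0.
case/card_gt0P => P; rewrite inE => /andP [sub_P0 /eqP size_P].
apply/existsP; exists i; apply/existsP; exists a; apply/existsP; exists I; apply/existsP; exists P.
rewrite size_I size_P !eqxx /capture_config sIA big_A /=.
by apply/andP; split; apply/forall_inP => p /(subsetP sub_P0); rewrite inE => /andP [].
Qed.

Lemma card_captured_pairs_le (Sigma : finType) l M (f : {ffun 'I_M -> l.-tuple Sigma}) i a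
    (I : {set 'I_l}) :
  #|[set p : l.-tuple Sigma * Sigma | (p.1 \in f @: setT) && captures (f i) a I p.1 p.2]|
    <= #|[set p : 'I_M * Sigma | (p.1 != i) && captures (f i) a I (f p.1) p.2]| + #|Sigma|.
Proof.
set P0 := [set p : 'I_M * Sigma | _].
have cover : [set p : l.-tuple Sigma * Sigma | (p.1 \in f @: setT) && captures (f i) a I p.1 p.2]
    \subset (fun p => (f p.1, p.2)) @: P0 :|: (fun b => (f i, b)) @: setT.
  apply/subsetP => -[w b]; rewrite inE /= => /andP [/imsetP [j _ ->] cap].
  rewrite inE; have [->|ji] := eqVneq j i; first by rewrite orbC imset_f.
  by rewrite (imset_f (fun p => (f p.1, p.2)) (_ : (j, b) \in P0)) // inE ji.
apply: leq_trans (subset_leq_card cover) (leq_trans (leq_card_setU _ _) (leq_add _ _)).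
  exact: leq_imset_card.
by apply: leq_trans (leq_imset_card _ _) _; rewrite cardsT.
Qed.

Theorem lemma2 :
  exists C : nat,
  forall (Sigma : finType) (r n l : nat),
    #|Sigma| = r -> 2 <= r ->
    n_ge_2_plus_log n r ->
    2 ^ 7 * r ^ 3 * n <= l ->
    exists S : {set l.-tuple Sigma},
      #|S| = 2 ^ n /\
      forall (v : l.-tuple Sigma) (a : Sigma), v \in S ->
        (* (1) |v[a]| >= l/(2r) *)
        l <= 2 * r * #|pos v a| /\
        (* (2) for every I ⊆ v[a] with |I| = l/(8r) *)
        (forall I : {set 'I_l}, I \subset pos v a -> #|I| * (8 * r) = l ->
           #|[set p : l.-tuple Sigma * Sigma |
                (p.1 \in S) &&
                (#|pos v a :&: pos p.1 p.2| <= 2 * #|I :&: pos p.1 p.2|)]|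
             <= C * r ^ 2).
Proof.
exists 200 => Sigma _ n l <- r_ge2 /(n_ge_2_plus_log_ge2 r_ge2) n_ge2 l_ge.
have [f /and3P [no_repeat no_rare no_capture]] := exists_good_family r_ge2 (ltnW n_ge2) l_ge.
have f_inj : injective f.
  move=> i j fij; apply/eqP; apply: contraNT no_repeat => ij.
  by apply/existsP; exists i; apply/existsP; exists j; rewrite ij fij /=.
exists (f @: setT); split; first by rewrite card_imset // cardsT card_ord.
move=> _ a /imsetP [i _ ->].
have freq : l <= 2 * #|Sigma| * #|pos (f i) a|.
  by rewrite leqNgt; apply: contra no_rare => rare; apply/existsP; exists i; apply/existsP; exists a.
split=> // I sIA size_I; apply: leq_trans (card_captured_pairs_le f i a I) _.
have big_A : 4 * #|I| <= #|pos (f i) a|.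
  by move: freq size_I r_ge2; move: #|pos _ _| #|I| #|Sigma| => A s r; nia.
have := card_capture_pairs_lt no_capture size_I sIA big_A.
have : #|Sigma| <= #|Sigma| ^ 2 by rewrite -mulnn leq_pmull // ltnW.
lia.
Qed.
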